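(* Let $p$ be an odd prime, $n$ a positive integer with $\gcd(n,p)=1$, and let $S$ be a uniquely negacyclic subspace of $\mathbb{F}_p^n\times\mathbb{F}_p^n$ with generating pair $(g,f)$. Then $S$ is totally isotropic if and only if $$g(X)f(X^{-1})=f(X)g(X^{-1})\mod X^n+1.$$ Further, an element $(\mathbf{a},\mathbf{b})\in\mathbb{F}_p^n\times\mathbb{F}_p^n$ lies in $S^{\perp}$ if and only if $$a(X)f(X^{-1})=b(X)g(X^{-1})\mod X^n+1.$$
   Context: Let $N:\mathbb{F}_p^n\to\mathbb{F}_p^n$ be $(u_0,\dots,u_{n-1})\mapsto(-u_{n-1},u_0,\dots,u_{n-2})$; a subspace $S$ is simultaneously negacyclic if $(\mathbf{a},\mathbf{b})\in S$ implies $(N\mathbf{a},N\mathbf{b})\in S$. Let $\mathcal{R}=\mathbb{F}_p[X]/\langle X^n+1\rangle$, with vectors $(a_0,\dots,a_{n-1})$ identified with $a(X)=\sum a_iX^i\in\mathcal{R}$; in $\mathcal{R}$, $X^{-1}=-X^{n-1}$ and $a(X^{-1})$ denotes substitution. For a simultaneously negacyclic $S$, let $F=\{\mathbf{a}:(\mathbf{a},\mathbf{b})\in S\}$ (an ideal of $\mathcal{R}$) and $g$ its monic generator dividing $X^n+1$; $S$ is uniquely negacyclic if there is a unique $f\in\mathcal{R}$ with $(g,f)\in S$, and $(g,f)$ is its generating pair. The symplectic inner product is $\langle(\mathbf{a},\mathbf{b}),(\mathbf{c},\mathbf{d})\rangle_s=\mathbf{a}^T\mathbf{d}-\mathbf{b}^T\mathbf{c}$;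 $S$ is totally isotropic if it vanishes on $S\times S$; $S^\perp$ is the symplectic dual of $S$. *)

From HB Require Import structures.
From mathcomp Require Import all_boot all_order all_algebra.
Set Implicit Arguments. Unset Strict Implicit. Unset Printing Implicit Defensive.
Import Order.TTheory GRing.Theory Num.Theory.
Local Open Scope ring_scope.

Section Negacyclic.
Variables (F : fieldType) (n : nat).

(* negacyclic shift N(u_0,...,u_{n-1}) = (-u_{n-1}, u_0, ..., u_{n-2});
   ord_pred i is i-1 for i>0 and n-1 for i=0 *)
Definition negshift (u : 'rV[F]_n) : 'rV[F]_n :=
  \row_(i < n) (if val i == 0%N then - u 0 (ord_pred i) else u 0 (ord_pred i)).

Definition negmod : {poly F} := 'X^n + 1.

Definition polyv (u : 'rV[F]_n) : {poly F} := \sum_(i < n) u 0 i *: 'X^i.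

Definition vecp (q : {poly F}) : 'rV[F]_n := \row_(i < n) (q %% negmod)`_i.

(* X^{-1} = -X^{n-1} in R; a(X^{-1}) is substitution (then reduce mod X^n+1) *)
Definition Xinv : {poly F} := - 'X^(n.-1).
Definition subst_inv (q : {poly F}) : {poly F} := q \Po Xinv.

Definition is_subspace (S : 'rV[F]_n * 'rV[F]_n -> Prop) : Prop :=
  [/\ S (0, 0),
      forall x y, S x -> S y -> S (x.1 + y.1, x.2 + y.2)
    & forall (c : F) x, S x -> S (c *: x.1, c *: x.2)].

Definition simult_negacyclic (S : 'rV[F]_n * 'rV[F]_n -> Prop) : Prop :=
  forall a b, S (a, b) -> S (negshift a, negshift b).

Definition first_proj (S : 'rV[F]_n * 'rV[F]_n -> Prop) : 'rV[F]_n -> Prop :=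
  fun a => exists b, S (a, b).

Definition monic_generator (S : 'rV[F]_n * 'rV[F]_n -> Prop) (g : {poly F}) : Prop :=
  [/\ g \is monic, g %| negmod &
      forall a, first_proj S a <-> exists h : {poly F}, a = vecp (g * h)].

(* S (simultaneously negacyclic subspace) is uniquely negacyclic with
   generating pair (g, f) *)
Definition generating_pair (S : 'rV[F]_n * 'rV[F]_n -> Prop) (g : {poly F})
    (f : 'rV[F]_n) : Prop :=
  [/\ monic_generator S g, S (vecp g, f) &
      forall f', S (vecp g, f') -> f' = f].

Definition dotv (u v : 'rV[F]_n) : F := \sum_(i < n) u 0 i * v 0 i.

Definition sympl (x y : 'rV[F]_n * 'rV[F]_n) : F := dotv x.1 y.2 - dotv x.2 y.1.

Definition totally_isotropic (S : 'rV[F]_n * 'rV[F]_n -> Prop) : Prop :=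
  forall x y, S x -> S y -> sympl x y = 0.

Definition sympl_dual (S : 'rV[F]_n * 'rV[F]_n -> Prop) : 'rV[F]_n * 'rV[F]_n -> Prop :=
  fun x => forall y, S y -> sympl x y = 0.

End Negacyclic.

From HB Require Import structures.
From mathcomp Require Import all_boot all_order all_algebra.
From mathcomp Require Import zify.
Set Implicit Arguments.
Unset Strict Implicit.
Unset Printing Implicit Defensive.
Import GRing.Theory.
Local Open Scope ring_scope.

(* Work in R = F[X]/(X^n+1), where N is multiplication by X.  The dot product
   u.v is the constant term of u(X) v(X^-1) in R, and it is nondegenerate.
   The first components of S are the multiples of g and f is unique, so
   S = {(g h, f h) | h in R}, and <(a, b), (g h, f h)>_s is the constant term
   of (a(X) f(X^-1) - b(X) g(X^-1)) h(X^-1).  As h(X^-1) runs over all of R,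
   this vanishes for every h exactly when a(X) f(X^-1) = b(X) g(X^-1) in R.
   Total isotropy is this criterion applied to the elements (g h, f h). *)

Section NegacyclicRing.
Variables (F : fieldType) (n : nat).
(* For n = 0 the modulus X^0 + 1 = 2 vanishes in characteristic 2. *)
Hypothesis n_gt0 : (0 < n)%N.
Local Notation m := (negmod F n).
Local Notation vecp := (@vecp F n).
Local Notation Xinv := (Xinv F n).
Local Notation subst_inv := (@subst_inv F n).

Lemma size_negmod : size m = n.+1.
Proof. by rewrite /negmod -polyC1 size_XnaddC. Qed.

Lemma coef_negmod k : m`_k = (k == n)%:R + (k == 0)%:R.
Proof. by rewrite coefD coefXn coef1. Qed.

Lemma size_modp_negmod q : (size (q %% m)%R <= n)%N.
Proof. by rewrite -ltnS -size_negmod ltn_modp -size_poly_gt0 size_negmod. Qed.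

Lemma size_polyv (u : 'rV[F]_n) : (size (polyv u) <= n)%N.
Proof.
apply: leq_trans (size_sum _ _ _) _; apply/bigmax_leqP => i _.
by apply: leq_trans (size_scale_leq _ _) _; rewrite size_polyXn.
Qed.

Lemma coef_polyv (u : 'rV[F]_n) (i : 'I_n) : (polyv u)`_i = u 0 i.
Proof.
rewrite coef_sum (bigD1 i) //= coefZ coefXn eqxx mulr1 big1 ?addr0 // => j ji.
by rewrite coefZ coefXn eq_sym (inj_eq val_inj) (negbTE ji) mulr0.
Qed.

Lemma vecp_polyv u : vecp (polyv u) = u.
Proof.
apply/rowP => i; rewrite mxE modp_small ?coef_polyv //.
by rewrite size_negmod ltnS size_polyv.
Qed.

Lemma polyv_vecp q : polyv (vecp q) = q %% m.
Proof.
apply/polyP => k; case: (ltnP k n) => [kn | nk].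
  by rewrite (coef_polyv _ (Ordinal kn)) mxE.
by rewrite !nth_default // (leq_trans _ nk) ?size_polyv ?size_modp_negmod.
Qed.

Lemma eq_vecp q r : vecp q = vecp r <-> q %% m = r %% m.
Proof.
split=> [eqv | eqm]; first by rewrite -!polyv_vecp eqv.
by apply/rowP => i; rewrite !mxE eqm.
Qed.

Fact vecp_is_semilinear : semilinear vecp.
Proof.
split=> [c q | q r]; apply/rowP => i; rewrite !mxE.
  by rewrite modpZl coefZ.
by rewrite modpD coefD.
Qed.
HB.instance Definition _ :=
  GRing.isSemilinear.Build F {poly F} 'rV[F]_n _ vecp vecp_is_semilinear.

Lemma modp_sub_eq0 a b : (a - b) %% m = 0 -> a %% m = b %% m.
Proof. by rewrite modpD modpN => /subr0_eq. Qed.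

Lemma modp_XnD k : 'X^(n + k) %% m = (- 'X^k) %% m.
Proof.
apply: modp_sub_eq0; rewrite opprK exprD.
by rewrite -[X in _ + X]mul1r -mulrDl mulrC modp_mull.
Qed.

(* The top coefficient c of u(X) wraps around: X u(X) = X u(X) - c (X^n + 1)
   modulo X^n + 1, and the right-hand side has degree < n. *)
Lemma negshiftE (u : 'rV[F]_n) : negshift u = vecp ('X * polyv u).
Proof.
set P := polyv u; set c := P`_n.-1.
have XPmod : ('X * P) %% m = 'X * P - c *: m.
  rewrite -[in LHS](subrK (c *: m) ('X * P)) addrC -mul_polyC.
  rewrite modp_addl_mul_small // mul_polyC size_negmod ltnS.
  apply/leq_sizeP => k nk; rewrite coefB coefZ coef_negmod coefXM.
  rewrite (_ : (k == 0)%N = false) ?addr0; last by move: nk n_gt0; lia.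
  case: eqP => [-> | /eqP kn]; first by rewrite mulr1 subrr.
  rewrite mulr0 subr0 nth_default // (leq_trans (size_polyv u)) //.
  by move: nk kn n_gt0; lia.
apply/rowP => i; rewrite !mxE XPmod coefB coefZ coef_negmod coefXM.
rewrite (_ : (i == n :> nat) = false) ?add0r; last by rewrite ltn_eqF.
have ord_predE : nat_of_ord (ord_pred i) = if i == 0 :> nat then n.-1 else i.-1.
  case: i => [[|k] lt_k] /=; first by rewrite add0n modn_small ?prednK.
  by rewrite modnDr modn_small // ltnW.
rewrite -coef_polyv ord_predE; case: (nat_of_ord i == 0)%N.
  by rewrite mulr1 sub0r.
by rewrite mulr0 subr0.
Qed.

Lemma negshift_vecp q : negshift (vecp q) = vecp ('X * q).
Proof. by rewrite negshiftE; apply/eq_vecp; rewrite polyv_vecp modp_mul. Qed.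

(* The base case is 1 = -X^n modulo X^n + 1. *)
Lemma modp_Xinv_exp j : (j <= n)%N -> Xinv ^+ j %% m = (- 'X^(n - j)) %% m.
Proof.
elim: j => [_ | j IH ltjn].
  by rewrite expr0 subn0; apply: modp_sub_eq0; rewrite opprK addrC modpp.
rewrite exprS -modp_mul IH ?(ltnW ltjn) // modp_mul /Xinv mulrNN -exprD.
by rewrite (_ : (n.-1 + (n - j) = n + (n - j.+1))%N) ?modp_XnD //; lia.
Qed.

Lemma modp_subst_inv_negmod : subst_inv m %% m = 0.
Proof.
rewrite /subst_inv /negmod comp_polyD comp_Xn_poly -polyC1 comp_polyC modpD.
by rewrite modp_Xinv_exp // subnn expr0 -modpD addNr mod0p.
Qed.

Lemma modp_subst_inv q : subst_inv (q %% m) %% m = subst_inv q %% m.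
Proof.
rewrite [in RHS](divp_eq q m) /subst_inv comp_polyD comp_polyM modpD.
by rewrite -modp_mul modp_subst_inv_negmod mulr0 mod0p add0r.
Qed.

Definition cterm (q : {poly F}) : F := (q %% m)`_0.

Fact cterm_is_semiscalar : semiscalar cterm.
Proof.
by split=> [c q | q r]; rewrite /cterm (modpZl, modpD) (coefZ, coefD).
Qed.
HB.instance Definition _ :=
  GRing.isSemilinear.Build F {poly F} F _ cterm cterm_is_semiscalar.

Lemma cterm_modl a b : cterm ((a %% m) * b) = cterm (a * b).
Proof. by rewrite /cterm mulrC modp_mul mulrC. Qed.

Lemma cterm_modr a b : cterm (a * (b %% m)) = cterm (a * b).
Proof. by rewrite /cterm modp_mul. Qed.

Lemma cterm_Xn k : (k < n + n)%N -> cterm 'X^k = (k == 0)%N%:R - (k == n)%:R.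
Proof.
move=> k_lt; case: (ltnP k n) => [kn | nk].
  rewrite /cterm modp_small ?size_negmod ?size_polyXn //.
  by rewrite coefXn eq_sym (ltn_eqF kn) subr0.
rewrite -(subnKC nk) /cterm modp_XnD modp_small; last first.
  by rewrite size_negmod size_polyN size_polyXn; lia.
rewrite coefN coefXn (_ : (n + (k - n) == 0)%N = false); last by lia.
by rewrite (_ : (n + (k - n) == n)%N = (0 == k - n)%N) ?sub0r //; lia.
Qed.

Lemma cterm_Xn_Xinv (i j : 'I_n) : cterm ('X^i * Xinv ^+ j) = (i == j)%:R.
Proof.
rewrite -cterm_modr modp_Xinv_exp 1?ltnW // cterm_modr mulrN -exprD raddfN /=.
rewrite cterm_Xn; last by move: (ltn_ord i) (ltn_ord j); lia.
rewrite (_ : (i + (n - j) == 0)%N = false); last by move: (ltn_ord j); lia.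
rewrite (_ : (i + (n - j) == n)%N = (i == j)) ?sub0r ?opprK //.
by move: (ltn_ord i) (ltn_ord j); rewrite -(inj_eq val_inj) /=; lia.
Qed.

Lemma cterm_mul_subst_inv_modp a q :
  cterm (a * subst_inv (q %% m)) = cterm (a * subst_inv q).
Proof. by rewrite -cterm_modr modp_subst_inv cterm_modr. Qed.

Lemma dotvE (u v : 'rV[F]_n) : dotv u v = cterm (polyv u * subst_inv (polyv v)).
Proof.
have -> : subst_inv (polyv v) = \sum_(j < n) v 0 j *: Xinv ^+ j.
  rewrite /subst_inv /polyv raddf_sum; apply: eq_bigr => j _ /=.
  by rewrite comp_polyZ comp_Xn_poly.
rewrite {1}/polyv mulr_suml linear_sum; apply: eq_bigr => i _.
rewrite mulr_sumr linear_sum (bigD1 i) //= big1 ?addr0 => [|j ji].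
  by rewrite -scalerAr -scalerAl !linearZ /= cterm_Xn_Xinv eqxx mulr1 mulrC.
rewrite -scalerAr -scalerAl !linearZ /= cterm_Xn_Xinv.
by rewrite eq_sym (negbTE ji) !mulr0.
Qed.

Lemma dotv_nondeg (u : 'rV[F]_n) : (forall v, dotv u v = 0) -> u = 0.
Proof.
move=> u_perp; apply/rowP => i; rewrite mxE -(u_perp (\row_k (k == i)%:R)).
rewrite /dotv (bigD1 i) //= big1 ?addr0 => [|j /negbTE ji].
  by rewrite mxE eqxx mulr1.
by rewrite mxE ji mulr0.
Qed.

Lemma cterm_mul_subst_inv_eq0 r :
  (forall h, cterm (r * subst_inv h) = 0) <-> r %% m = 0.
Proof.
split=> [r_perp | r0 h]; last by rewrite -cterm_modl r0 mul0r linear0.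
have : vecp r = vecp 0.
  rewrite linear0; apply: dotv_nondeg => v.
  by rewrite dotvE polyv_vecp cterm_modl.
by move/eq_vecp; rewrite mod0p.
Qed.

End NegacyclicRing.

Section UniquelyNegacyclic.
Variables (F : fieldType) (n : nat) (S : 'rV[F]_n * 'rV[F]_n -> Prop).
Variables (g : {poly F}) (f : 'rV[F]_n).
Hypotheses (n_gt0 : (0 < n)%N) (S_subspace : is_subspace S).
Hypotheses (S_negacyclic : simult_negacyclic S) (S_gen : generating_pair S g f).
Local Notation m := (negmod F n).
Local Notation vecp := (@vecp F n).
Local Notation subst_inv := (@subst_inv F n).

Lemma subspaceB x y : S x -> S y -> S (x.1 - y.1, x.2 - y.2).
Proof.
have [_ SD SZ] := S_subspace => Sx Sy.
by have := SD _ _ Sx (SZ (-1) _ Sy); rewrite /= !scaleN1r.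
Qed.

Lemma generating_pair_mul h : S (vecp (g * h), vecp (polyv f * h)).
Proof.
have [S0 SD SZ] := S_subspace; have [_ Sgf _] := S_gen.
elim/poly_ind: h => [|h c IH]; first by rewrite !mulr0 linear0.
have mul_XaddC q : q * (h * 'X + c%:P) = 'X * (q * h) + c *: q.
  by rewrite mulrDr mulrA [_ * 'X]mulrC (mulrC q c%:P) mul_polyC.
rewrite !mul_XaddC !linearD !linearZ /= -!(negshift_vecp n_gt0).
by have := SD _ _ (S_negacyclic IH) (SZ c _ Sgf); rewrite /= vecp_polyv.
Qed.

Lemma mem_generating_pair x :
  S x <-> exists h, x = (vecp (g * h), vecp (polyv f * h)).
Proof.
split=> [Sx | [h ->]]; last exact: generating_pair_mul.
have [[_ _ first_projP] Sgf f_uniq] := S_gen.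
case: x Sx => a b Sab.
have [h a_eq] : exists h, a = vecp (g * h) by apply/first_projP; exists b.
exists h; rewrite a_eq; congr (_, _).
have S0b : S (0, b - vecp (polyv f * h)).
  by have := subspaceB Sab (generating_pair_mul h); rewrite /= a_eq subrr.
have /= := subspaceB Sgf S0b; rewrite subr0 => /f_uniq; rewrite -[RHS]subr0.
by move=> /addrI /oppr_inj /subr0_eq.
Qed.

Lemma sympl_generating_pair a b h :
  sympl (a, b) (vecp (g * h), vecp (polyv f * h)) =
  cterm n
    ((polyv a * subst_inv (polyv f) - polyv b * subst_inv g) * subst_inv h).
Proof.
rewrite /sympl /= 2!(dotvE n_gt0) !(polyv_vecp n_gt0).
rewrite !(@cterm_mul_subst_inv_modp F n n_gt0).
by rewrite /subst_inv !comp_polyM mulrBl linearB !mulrA.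
Qed.

Lemma sympl_dualP a b : sympl_dual S (a, b) <->
  (polyv a * subst_inv (polyv f)) %% m = (polyv b * subst_inv g) %% m.
Proof.
split=> [ab_perp | eqab y /mem_generating_pair [h ->]].
  apply/modp_sub_eq0/(cterm_mul_subst_inv_eq0 n_gt0) => h.
  by rewrite -sympl_generating_pair; apply/ab_perp/generating_pair_mul.
rewrite sympl_generating_pair; move: h; apply/(cterm_mul_subst_inv_eq0 n_gt0).
by rewrite modpD modpN eqab subrr.
Qed.

Lemma totally_isotropicP : totally_isotropic S <->
  (g * subst_inv (polyv f)) %% m = (polyv f * subst_inv g) %% m.
Proof.
have dual_mul h : sympl_dual S (vecp (g * h), vecp (polyv f * h)) <->
    ((g * subst_inv (polyv f)) * h) %% m = ((polyv f * subst_inv g) * h) %% m.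
  rewrite sympl_dualP !(polyv_vecp n_gt0) ![(_ %% m) * _]mulrC !modp_mul.
  by rewrite ![subst_inv _ * _]mulrC ![_ * h * _]mulrAC.
split=> [S_iso | eqgf x y /mem_generating_pair [h ->] Sy].
  have := (dual_mul 1).1; rewrite !mulr1; apply=> y; apply: S_iso.
  by have := generating_pair_mul 1; rewrite !mulr1.
by apply: (dual_mul h).2 Sy; rewrite !(mulrC _ h) -[LHS]modp_mul eqgf modp_mul.
Qed.

End UniquelyNegacyclic.

Theorem mainTheorem5 (p n : nat) (S : 'rV['F_p]_n * 'rV['F_p]_n -> Prop)
    (g : {poly 'F_p}) (f : 'rV['F_p]_n) :
  prime p -> odd p -> (0 < n)%N -> coprime n p ->
  is_subspace S -> simult_negacyclic S -> generating_pair S g f ->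
  (totally_isotropic S <->
     (g * subst_inv n (polyv f)) %% negmod _ n
       = (polyv f * subst_inv n g) %% negmod _ n)
  /\
  (forall a b : 'rV['F_p]_n,
     sympl_dual S (a, b) <->
     (polyv a * subst_inv n (polyv f)) %% negmod _ n
       = (polyv b * subst_inv n g) %% negmod _ n).
Proof.
move=> _ _ n_gt0 _ S_subspace S_negacyclic S_gen; split.
  exact: totally_isotropicP.
by move=> a b; apply: sympl_dualP.
Qed.
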